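(* For any finite simple graphs $H_1$ and $H_2$, $$\rho_R(H_1+H_2)=\rho_R(H_1)+\rho_R(H_2),$$ where $H_1+H_2$ denotes the join of $H_1$ and $H_2$.
   Context: The join $H_1+H_2$ is the graph obtained from the disjoint union of $H_1$ and $H_2$ by adding all edges between $V(H_1)$ and $V(H_2)$. If $V(H)=\{h_1,\ldots,h_n\}$, a replication graph of $H$ is a graph $G$ obtained by replacing each vertex $h_i$ by a clique $K_i$ with $|K_i|\ge1$ (cliques pairwise vertex-disjoint), where two vertices in different cliques $K_i,K_j$ are adjacent iff $h_ih_j\in E(H)$. $\rho_R(H)$ is the minimum order of a replication graph $G$ of $H$ such that every proper vertex coloring of $G$ admits a choice of exactly one vertex from each clique $K_i$ with all chosen vertices of pairwise different colors. *)

From Stdlib Require Import ClassicalEpsilon.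
From mathcomp Require Import all_boot.
Set Implicit Arguments. Unset Strict Implicit. Unset Printing Implicit Defensive.

Definition simple_graph (V : finType) (e : rel V) : Prop :=
  symmetric e /\ irreflexive e.

Definition join_rel (V1 V2 : finType) (e1 : rel V1) (e2 : rel V2) : rel (V1 + V2)%type :=
  fun x y => match x, y with
             | inl a, inl b => e1 a b
             | inr a, inr b => e2 a b
             | _, _ => true
             end.

(* Replication graph of (V, e) with clique sizes m : vertices are pairs (v, i), i < m v;
   two distinct vertices are adjacent iff they lie in the same clique or their
   cliques correspond to adjacent vertices of H. *)
Definition repl_vertex (V : finType) (m : V -> nat) : finType := {v : V & 'I_(m v)}.

Definition repl_adj (V : finType) (e : rel V) (m : V -> nat) : rel (@repl_vertex V m) :=
  fun x y => (x != y) && ((tag x == tag y) || e (tag x) (tag y)).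

Definition proper_coloring (T : finType) (adj : rel T) (c : T -> nat) : Prop :=
  forall x y, adj x y -> c x != c y.

(* Every proper colouring of the replication graph admits a rainbow transversal
   of the cliques. *)
Definition good_replication (V : finType) (e : rel V) (m : V -> nat) : Prop :=
  (forall v, 0 < m v) /\
  forall c : @repl_vertex V m -> nat, proper_coloring (@repl_adj V e m) c ->
    exists f : forall v : V, 'I_(m v),
      injective (fun v : V => c (existT (fun w => 'I_(m w)) v (f v))).

Definition rhoR_pred (V : finType) (e : rel V) : pred nat :=
  fun n => if excluded_middle_informative
                (exists m : V -> nat, good_replication e m /\ \sum_(v : V) m v = n)
           then true else false.

(* rho_R(H): the minimum order of a good replication graph (0 if none existed;
   one always exists, so this convention is immaterial). *)
Definition rhoR (V : finType) (e : rel V) : nat :=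
  match excluded_middle_informative (exists n, rhoR_pred e n) with
  | left h => ex_minn h
  | right _ => 0
  end.

From mathcomp Require Import all_boot.
From Stdlib Require Import ClassicalEpsilon.
Set Implicit Arguments. Unset Strict Implicit. Unset Printing Implicit Defensive.

(* Goodness passes to induced subgraphs: colour the cliques outside the subgraph
   with pairwise distinct fresh (odd) colours, and the cliques inside with the
   doubles of a given colouring; a rainbow transversal of the whole graph then
   restricts to one of the subgraph.  Conversely, in the join every vertex of one
   side is adjacent to every vertex of the other, so rainbow transversals of the
   two sides combine.  Hence optimal replications of H1 and H2 give one of
   H1 + H2, and an optimal one of H1 + H2 splits into replications of H1 and H2.
   The minima exist because cliques of size |V| are always good: the colours
   within a clique are distinct, so a rainbow transversal can be chosen greedily. *)

Section ReplicationMap.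

Variables (V V' : finType) (h : V' -> V) (m : V -> nat).

Definition repl_map (x : repl_vertex (fun a => m (h a))) : repl_vertex m :=
  existT (fun w => 'I_(m w)) (h (tag x)) (tagged x).

Hypothesis h_inj : injective h.

Lemma repl_map_inj : injective repl_map.
Proof.
move=> [a i] [b j] eq_ab.
have /h_inj /= ab := congr1 tag eq_ab; subst b.
by have -> : i = j := eq_from_Tagged eq_ab.
Qed.

Lemma repl_adj_map (e : rel V) (e' : rel V') :
    (forall a b, e' a b = e (h a) (h b)) ->
  forall x y, repl_adj e (repl_map x) (repl_map y) = repl_adj e' x y.
Proof.
move=> e'E [a i] [b j].
by rewrite /repl_adj (inj_eq repl_map_inj) /= (inj_eq h_inj) e'E.
Qed.

Lemma good_replication_induced (e : rel V) (e' : rel V') :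
    (forall a b, e' a b = e (h a) (h b)) ->
  good_replication e m -> good_replication e' (fun a => m (h a)).
Proof.
move=> e'E [m_gt0 good_e]; split=> [a|c' c'_proper]; first exact: m_gt0.
pose c x := if [pick y | repl_map y == x] is Some y then (c' y).*2
            else (enum_rank x : nat).*2.+1.
have cE y : c (repl_map y) = (c' y).*2.
  rewrite /c; case: pickP => [y' /eqP/repl_map_inj -> // |].
  by move/(_ y); rewrite eqxx.
have c_proper : proper_coloring (@repl_adj _ e m) c.
  move=> x y adj_xy; rewrite /c.
  case: pickP => [x' /eqP eq_x|_]; case: pickP => [y' /eqP eq_y|_].
  - rewrite (inj_eq double_inj); apply: c'_proper.
    by rewrite -(repl_adj_map e'E) eq_x eq_y.
  - by apply/eqP => /(congr1 odd); rewrite /= !odd_double.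
  - by apply/eqP => /(congr1 odd); rewrite /= !odd_double.
  - rewrite eqSS (inj_eq double_inj) (inj_eq val_inj) (inj_eq enum_rank_inj).
    by case/andP: adj_xy.
have [f f_inj] := good_e c c_proper.
exists (fun a => f (h a)) => a b /= eq_ab.
apply: h_inj; apply: f_inj.
by move: (cE (existT _ a (f (h a)))) (cE (existT _ b (f (h b)))) => /= -> ->; rewrite eq_ab.
Qed.

End ReplicationMap.

Arguments repl_map {V V'} h {m}.

Lemma good_replication_join (V1 V2 : finType) (e1 : rel V1) (e2 : rel V2)
    (m : (V1 + V2)%type -> nat) :
  good_replication e1 (fun a => m (inl a)) -> good_replication e2 (fun b => m (inr b)) ->
  good_replication (join_rel e1 e2) m.
Proof.
move=> [m1_gt0 good1] [m2_gt0 good2]; split=> [[a|b] // | c c_proper].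
have adj_inl := repl_adj_map (m := m) (@inl_inj V1 V2) (e := join_rel e1 e2) (e' := e1)
  (fun _ _ => erefl).
have adj_inr := repl_adj_map (m := m) (@inr_inj V1 V2) (e := join_rel e1 e2) (e' := e2)
  (fun _ _ => erefl).
have [f1 f1_inj] := good1 (fun x => c (repl_map inl x))
  (fun x y adj_xy => c_proper _ _ (etrans (adj_inl x y) adj_xy)).
have [f2 f2_inj] := good2 (fun x => c (repl_map inr x))
  (fun x y adj_xy => c_proper _ _ (etrans (adj_inr x y) adj_xy)).
have cross a b : c (repl_map inl (existT _ a (f1 a))) != c (repl_map inr (existT _ b (f2 b))).
  exact: c_proper.
exists (fun w => match w as w return 'I_(m w) with inl a => f1 a | inr b => f2 b end).
move=> [a|b] [a'|b'] /= eq_c.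
- by rewrite (f1_inj a a' eq_c).
- by have := cross a b'; rewrite eq_c eqxx.
- by have := cross a' b; rewrite eq_c eqxx.
- by rewrite (f2_inj b b' eq_c).
Qed.

Lemma proper_coloring_clique_inj (V : finType) (e : rel V) (m : V -> nat)
    (c : repl_vertex m -> nat) (v : V) :
  proper_coloring (@repl_adj _ e m) c -> injective (fun i : 'I_(m v) => c (existT _ v i)).
Proof.
move=> c_proper i j eq_c; apply/eqP; apply: contraT => neq_ij.
have adj_ij : repl_adj e (existT (fun w => 'I_(m w)) v i) (existT _ v j).
  rewrite /repl_adj /= eqxx andbT; apply: contra neq_ij => /eqP eq_ij.
  by rewrite (eq_from_Tagged eq_ij).
by have := c_proper _ _ adj_ij; rewrite eq_c eqxx.
Qed.

Lemma injective_choice (T : finType) (k : nat) (g : T -> 'I_k -> nat) :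
  (forall v, injective (g v)) -> #|T| <= k ->
  exists f : T -> 'I_k, injective (fun v => g v (f v)).
Proof.
move=> g_inj card_T.
suff greedy s : uniq s -> exists f : T -> 'I_k, {in s &, injective (fun v => g v (f v))}.
  have [f f_inj] := greedy _ (enum_uniq T).
  by exists f => u v; apply: f_inj; rewrite mem_enum.
elim: s => [_ | v s IHs uniq_vs]; first by exists (fun v => widen_ord card_T (enum_rank v)).
have /andP[v_notin_s uniq_s] := uniq_vs.
have [f f_inj] := IHs uniq_s.
pose used := [seq g u (f u) | u <- s].
have [i i_free] : exists i, g v i \notin used.
  apply/existsP; apply: contraT; rewrite negb_exists => /forallP all_used.
  have uniq_colours : uniq [seq g v i | i <- enum 'I_k].
    by rewrite map_inj_uniq ?enum_uniq.
  have /(uniq_leq_size uniq_colours) : {subset [seq g v i | i <- enum 'I_k] <= used}.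
    by move=> _ /mapP[i _ ->]; apply/negPn.
  rewrite size_map size_enum_ord size_map; apply: contraTT => _; rewrite -ltnNge.
  apply: leq_trans card_T; rewrite -[_.+1]/(size (v :: s)) -(card_uniqP uniq_vs).
  exact: max_card.
have fresh u : u \in s -> g v i != g u (f u).
  by move=> u_in_s; apply: contraNneq i_free => ->; apply: map_f.
have neq_v u : u \in s -> (u == v) = false.
  by move=> u_in_s; apply: contraNF v_notin_s => /eqP <-.
exists (fun u => if u == v then i else f u) => x y.
rewrite !inE => /predU1P[-> | x_in_s] /predU1P[-> | y_in_s] //=; rewrite ?eqxx.
- by rewrite neq_v // => eq_g; have := fresh y y_in_s; rewrite eq_g eqxx.
- by rewrite neq_v // => eq_g; have := fresh x x_in_s; rewrite eq_g eqxx.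
- by rewrite !neq_v //; apply: f_inj.
Qed.

Lemma good_replication_exists (V : finType) (e : rel V) : exists m, good_replication e m.
Proof.
exists (fun=> #|V|); split=> [v | c c_proper]; first by apply/card_gt0P; exists v.
have clique_inj v := proper_coloring_clique_inj (v := v) c_proper.
have [f f_inj] := injective_choice clique_inj (leqnn _).
by exists f.
Qed.

Lemma rhoR_predP (V : finType) (e : rel V) (n : nat) :
  rhoR_pred e n <-> exists m, good_replication e m /\ \sum_(v : V) m v = n.
Proof. by rewrite /rhoR_pred; case: excluded_middle_informative. Qed.

Lemma rhoR_attained (V : finType) (e : rel V) :
  exists m, good_replication e m /\ \sum_(v : V) m v = rhoR e.
Proof.
rewrite /rhoR; case: excluded_middle_informative => [ex_n | []].
  by case: ex_minnP => n /rhoR_predP.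
have [m good_m] := good_replication_exists e.
by exists (\sum_(v : V) m v); apply/rhoR_predP; exists m.
Qed.

Lemma rhoR_min (V : finType) (e : rel V) (m : V -> nat) :
  good_replication e m -> rhoR e <= \sum_(v : V) m v.
Proof.
move=> good_m; rewrite /rhoR; case: excluded_middle_informative => [ex_n | []].
  by case: ex_minnP => n _; apply; apply/rhoR_predP; exists m.
by exists (\sum_(v : V) m v); apply/rhoR_predP; exists m.
Qed.

Theorem corollary5p1 (V1 V2 : finType) (e1 : rel V1) (e2 : rel V2) :
  simple_graph e1 -> simple_graph e2 ->
  rhoR (join_rel e1 e2) = rhoR e1 + rhoR e2.
Proof.
move=> _ _; apply/eqP; rewrite eqn_leq; apply/andP; split.
- have [m1 [good1 <-]] := rhoR_attained e1.
  have [m2 [good2 <-]] := rhoR_attained e2.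
  pose m w := match w with inl a => m1 a | inr b => m2 b end.
  have good_m : good_replication (join_rel e1 e2) m := good_replication_join good1 good2.
  by have := rhoR_min good_m; rewrite big_sumType.
- have [m [good_m <-]] := rhoR_attained (join_rel e1 e2).
  rewrite big_sumType leq_add // rhoR_min //.
  + exact: (good_replication_induced (@inl_inj V1 V2) (e' := e1) (fun _ _ => erefl) good_m).
  + exact: (good_replication_induced (@inr_inj V1 V2) (e' := e2) (fun _ _ => erefl) good_m).
Qed.
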